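(* Let $h(n)$ be the maximum size of a peak-pit Condorcet domain on $n$ alternatives and $f(n)$ the maximum size of a Condorcet domain on $n$ alternatives. Then there is a constant $C>0$ such that $f(n)\ge h(n)\ge C\left(\sqrt{2+2\sqrt2}\right)^n$ for all sufficiently large $n$; in particular $h(n)>2.1973^n$ for all sufficiently large $n$.
   Context: A domain is a set of linear orders on $[n]$. A Condorcet domain is a domain $D$ such that for every profile with an odd number of voters whose preferences all lie in $D$, the pairwise majority relation is transitive. For a triple $a<b<c$ of alternatives, call them the 1st, 2nd, 3rd; the never condition $xNp$ says the $x$-th alternative is never in position $p$ within the triple in any order of the domain. A domain is peak-pit if for every triple its restriction satisfies a never condition of the form $xN3$ or $xN1$. *)

From mathcomp Require Import all_boot all_fingroup.
From mathcomp Require Import boolp.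
Set Implicit Arguments. Unset Strict Implicit. Unset Printing Implicit Defensive.

(* A linear order on the n alternatives 'I_n is encoded by a permutation
   s : {perm 'I_n}, where s x is the rank of alternative x
   (rank 0 = most preferred).  x is ranked above y iff s x < s y. *)
Notation order n := {perm 'I_n}.

Definition domain n := {set order n}.

Definition nabove n (P : seq (order n)) (x y : 'I_n) : nat :=
  count (fun s : order n => s x < s y) P.

Definition majority n (P : seq (order n)) (x y : 'I_n) : bool :=
  nabove P y x < nabove P x y.

Definition transitive_rel n (r : 'I_n -> 'I_n -> bool) : Prop :=
  forall x y z, r x y -> r y z -> r x z.

Definition condorcet n (D : domain n) : Prop :=
  forall P : seq (order n), odd (size P) -> all (fun s => s \in D) P ->
    transitive_rel (majority P).

(* position (1, 2 or 3; 1 = top) of alternative x within the triple {a,b,c}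
   in the order s, where x is one of a, b, c *)
Definition tpos n (s : order n) (a b c x : 'I_n) : nat :=
  1 + (s a < s x) + (s b < s x) + (s c < s x).

Definition tnth3 n (a b c : 'I_n) (k : nat) : 'I_n :=
  if k == 1 then a else if k == 2 then b else c.

Definition never n (D : domain n) (a b c : 'I_n) (k p : nat) : Prop :=
  forall s, s \in D -> tpos s a b c (tnth3 a b c k) <> p.

Definition peak_pit n (D : domain n) : Prop :=
  forall a b c : 'I_n, a < b -> b < c ->
    exists k, [/\ 1 <= k <= 3 & (never D a b c k 3 \/ never D a b c k 1)].

Definition f_max (n : nat) : nat :=
  \max_(D : domain n | `[< condorcet D >]) #|D|.

Definition h_max (n : nat) : nat :=
  \max_(D : domain n | `[< condorcet D /\ peak_pit D >]) #|D|.

(* Large peak-pit domains are built by concatenation with shuffling.  Keep, with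
   every order of a peak-pit domain on [0, n), the length [t] of its "top tail":
   the order ends with [n - t, ..., n - 1] in increasing order.  Append a block
   of 8 new alternatives, ordered by any order [b] of a fixed 211-element
   peak-pit domain on 8 alternatives, and shuffle the new alternatives that open
   [b] (in increasing order) into the top tail in all possible ways.  Triples
   inside the old or the new alternatives keep their never conditions, triples
   with two old alternatives satisfy [1N3] and those with one old alternative
   [3N1], so the result is again peak-pit, hence Condorcet: a never condition
   [xN1] or [xN3] on a triple rules out a majority cycle on it.  The sum over
   all orders of a weight of their tail length grows by a factor of at least
   544 at each step, while
   [(2 + 2 sqrt 2) ^ 4 <= 544] and [2.1973 ^ 8 < 544]. *)

From Stdlib Require Import Reals Lra.
From mathcomp Require Import all_boot all_fingroup boolp zify.
Set Implicit Arguments. Unset Strict Implicit. Unset Printing Implicit Defensive.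

Definition before (s : seq nat) x y := index x s < index y s.

Lemma before_filter (P : pred nat) s x y :
  P x -> P y -> before (filter P s) x y = before s x y.
Proof.
rewrite /before => Px Py; elim: s => [|z s IH] //=.
case Pz: (P z) => /=; first by case: ifP; case: ifP => //; rewrite ltnS IH.
have zx : (z == x) = false by apply/negbTE; apply: contraFneq Pz => ->.
have zy : (z == y) = false by apply/negbTE; apply: contraFneq Pz => ->.
by rewrite zx zy ltnS IH.
Qed.

Lemma before_map (f : nat -> nat) s x y :
  injective f -> before (map f s) (f x) (f y) = before s x y.
Proof. by move=> f_inj; rewrite /before !index_map. Qed.

Lemma before_irr s x : before s x x = false.
Proof. by rewrite /before ltnn. Qed.

Lemma before_asym s x y : before s x y -> ~~ before s y x.
Proof. by rewrite /before -leqNgt => /ltnW. Qed.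

Lemma before_total s x y : x \in s -> y \in s -> x != y -> before s x y || before s y x.
Proof.
move=> xs ys; rewrite /before -neq_ltn; apply: contra => /eqP e.
by rewrite -(nth_index 0 xs) e nth_index.
Qed.

Lemma before_cat_mem l1 l2 x y : x \in l1 -> y \notin l1 -> before (l1 ++ l2) x y.
Proof.
move=> xl1 yl1; rewrite /before !index_cat xl1 (negbTE yl1).
by apply: leq_trans (leq_addr _ _); rewrite index_mem.
Qed.

Lemma before_catl l1 l2 x y : x \in l1 -> y \in l1 -> before (l1 ++ l2) x y = before l1 x y.
Proof. by move=> xl1 yl1; rewrite /before !index_cat xl1 yl1. Qed.

Lemma before_catr l1 l2 x y :
  x \notin l1 -> y \notin l1 -> before (l1 ++ l2) x y = before l2 x y.
Proof. by move=> xl1 yl1; rewrite /before !index_cat (negbTE xl1) (negbTE yl1) ltn_add2l. Qed.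

Lemma index_iota_mem a c x : a <= x < a + c -> index x (iota a c) = x - a.
Proof.
move=> xac; have lt_xa : x - a < size (iota a c) by rewrite size_iota; lia.
have := index_uniq 0 lt_xa (iota_uniq a c); rewrite nth_iota ?subnKC //; first lia.
by rewrite size_iota in lt_xa.
Qed.

Lemma before_iota a c x y :
  a <= x < a + c -> a <= y < a + c -> before (iota a c) x y = (x < y).
Proof. by move=> hx hy; rewrite /before !index_iota_mem //; apply/idP/idP; lia. Qed.

Fixpoint shuffle (m : seq bool) (A B : seq nat) : seq nat :=
  match m with
  | [::] => A ++ B
  | true :: m' => if B is y :: B' then y :: shuffle m' A B' else shuffle m' A B
  | false :: m' => if A is x :: A' then x :: shuffle m' A' B else shuffle m' A B
  end.

Lemma perm_shuffle m A B : perm_eq (shuffle m A B) (A ++ B).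
Proof.
elim: m A B => [|[] m IH] A B /=; first exact: perm_refl.
- case: B => [|y B]; first by move=> *; apply: IH.
  by rewrite perm_sym (perm_catCA A [:: y] B) /= perm_cons perm_sym IH.
- by case: A => [|x A]; [exact: IH | rewrite /= perm_cons IH].
Qed.

Lemma size_shuffle m A B : size (shuffle m A B) = size A + size B.
Proof. by rewrite (perm_size (perm_shuffle m A B)) size_cat. Qed.

Lemma filter_all_predC (P : pred nat) B : all (predC P) B -> filter P B = [::].
Proof. by elim: B => [|y B IH] //= /andP[/negbTE -> /IH]. Qed.

Lemma filter_shufflel (P : pred nat) m A B :
  all P A -> all (predC P) B -> filter P (shuffle m A B) = A.
Proof.
elim: m A B => [|[] m IH] A B /=.
- by move=> hA hB; rewrite filter_cat (all_filterP hA) filter_all_predC ?cats0.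
- case: B => [|y B] hA /=; first by move=> *; apply: IH.
  by case/andP=> /= /negbTE -> hB /=; apply: IH.
- case: A => [|x A] /=; first by move=> *; apply: IH.
  by case/andP=> /= -> hA hB /=; rewrite IH.
Qed.

Lemma filter_shuffler (P : pred nat) m A B :
  all (predC P) A -> all P B -> filter P (shuffle m A B) = B.
Proof.
elim: m A B => [|[] m IH] A B /=.
- by move=> hA hB; rewrite filter_cat (all_filterP hB) filter_all_predC.
- case: B => [|y B] hA /=; first by move=> *; apply: IH.
  by case/andP=> /= -> hB /=; rewrite IH.
- case: A => [|x A] /=; first by move=> *; apply: IH.
  by case/andP=> /= /negbTE -> hA hB /=; apply: IH.
Qed.

Lemma map_shuffle (P : pred nat) m A B :
  count negb m = size A -> count idfun m = size B ->
  all (predC P) A -> all P B -> map P (shuffle m A B) = m.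
Proof.
elim: m A B => [|[] m IH] A B /=; first by case: A => //; case: B.
- case: B => [|y B] //=; rewrite add0n => cA [cB] hA /andP[Py hB].
  by rewrite Py IH.
- case: A => [|x A] //=; rewrite add0n => -[cA] cB /andP[/= Px hA] hB.
  by rewrite (negbTE Px) IH.
Qed.

Lemma shuffle_cat m1 m2 A B : count negb m1 <= size A -> count idfun m1 <= size B ->
  shuffle (m1 ++ m2) A B =
    shuffle m1 (take (count negb m1) A) (take (count idfun m1) B)
    ++ shuffle m2 (drop (count negb m1) A) (drop (count idfun m1) B).
Proof.
elim: m1 A B => [|[] m1 IH] A B /=; first by rewrite !take0 !drop0.
- by rewrite add0n add1n; case: B => [|y B] //= cA cB; rewrite IH.
- by rewrite add0n add1n; case: A => [|x A] //= cA cB; rewrite IH.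
Qed.

Lemma shuffle_nseq_true j B : shuffle (nseq j true) [::] B = B.
Proof. by elim: j B => [|j IH] [|y B] //=; rewrite ?IH ?cats0. Qed.

Lemma shuffle_nseq_false A m B : shuffle (nseq (size A) false ++ m) A B = A ++ shuffle m [::] B.
Proof. by elim: A => [|x A IH] //=; rewrite IH. Qed.

Lemma count_nseq_true (a : pred bool) j : count a (nseq j true) = a true * j.
Proof. by elim: j => [|j IH] /=; rewrite ?muln0 // IH mulnS. Qed.

Fixpoint shuffle_masks (a : nat) : nat -> seq (seq bool) :=
  match a with
  | 0 => fun b => [:: nseq b true]
  | a'.+1 => fix masks_b b := match b with
        | 0 => [:: nseq a'.+1 false]
        | b'.+1 => map (cons false) (shuffle_masks a' b'.+1) ++ map (cons true) (masks_b b')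
        end
  end.

Lemma mem_shuffle_masks a b m :
  m \in shuffle_masks a b -> count negb m = a /\ count idfun m = b.
Proof.
elim: a b m => [|a IHa] b m /=.
- by rewrite inE => /eqP ->; rewrite !count_nseq_true /= mul0n mul1n.
- elim: b m => [|b IHb] m /=.
  + rewrite inE => /eqP ->; split; first by elim: a {IHa} => //= a ->.
    by elim: a {IHa}.
  + rewrite mem_cat => /orP[] /mapP[m' hm' ->] /=.
    * by have [-> ->] := IHa _ _ hm'.
    * by have [-> ->] := IHb _ hm'.
Qed.

Lemma uniq_shuffle_masks a b : uniq (shuffle_masks a b).
Proof.
elim: a b => [|a IHa] b //=; elim: b => [|b IHb] //=.
rewrite cat_uniq !map_inj_uniq ?IHa ?IHb //; try by move=> x y [].
by rewrite andbT; apply/hasPn => m /mapP[m' _ ->]; apply/mapP => -[m'' _].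
Qed.

Lemma shuffle_inj_mask (P : pred nat) pre A B post m1 m2 :
  count negb m1 = size A -> count idfun m1 = size B ->
  count negb m2 = size A -> count idfun m2 = size B ->
  all (predC P) A -> all P B ->
  pre ++ shuffle m1 A B ++ post = pre ++ shuffle m2 A B ++ post -> m1 = m2.
Proof.
move=> a1 b1 a2 b2 hA hB /eqP; rewrite eqseq_cat // eqxx /= eqseq_cat ?size_shuffle //.
case/andP=> /eqP e _.
by rewrite -(map_shuffle a1 b1 hA hB) -(map_shuffle a2 b2 hA hB) e.
Qed.

(* [respects s i j k c]: in the order [s] (best first) the triple [i < j < k]
   obeys [1N3] if [c] and [3N1] otherwise. *)
Definition respects s i j k (c : bool) :=
  if c then ~~ (before s j i && before s k i) else before s i k || before s j k.

(* The rule of [r] alternatives followed by [m] blocks of [d] alternatives, each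
   block obeying [inner]: a triple with two members below a block and one in it
   gets [1N3], a triple with one member below it and two in it gets [3N1]. *)
Fixpoint concat_rule d (inner : nat -> nat -> nat -> bool) r m i j k : bool :=
  if m is m'.+1 then
    let base := r + d * m' in
    if base <= i then inner (i - base) (j - base) (k - base)
    else if k < base then concat_rule d inner r m' i j k else j < base
  else true.

Definition top_tail N u (s : seq nat) := exists pre, s = pre ++ iota (N - u) u.

Lemma top_tail_shorten N u u' s : u' <= u -> u <= N -> top_tail N u s -> top_tail N u' s.
Proof.
move=> u'u uN [p ->]; exists (p ++ iota (N - u) (u - u')).
have -> : N - u' = N - u + (u - u') by lia.
by rewrite -catA -iotaD subnK.
Qed.

Fixpoint leading_trues (l : seq bool) :=
  if l is true :: l' then (leading_trues l').+1 else 0.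

Definition trailing_trues (m : seq bool) := leading_trues (rev m).

Lemma trailing_truesE m :
  m = rev (drop (trailing_trues m) (rev m)) ++ nseq (trailing_trues m) true.
Proof.
have lead l : l = nseq (leading_trues l) true ++ drop (leading_trues l) l.
  by elim: l => [|[] l IH] //=; rewrite -IH.
by rewrite -(rev_nseq _ true) -rev_cat /trailing_trues -lead revK.
Qed.

(* Lengths of top tails are capped, so that finitely many weights suffice. *)
Definition cap := 10.

(* A lower bound for the top tail of an extended order, see [extend_top_tail]. *)
Definition next_tail tau h t (m : seq bool) :=
  minn cap (if h < 8 then t
            else if m == nseq tau false ++ nseq 8 true then tau + 8 else trailing_trues m).

Definition extend n (a : seq nat) tau (b : seq nat) h (m : seq bool) :=
  take (n - tau) a ++ shuffle m (drop (n - tau) a) (map (addn n) (take h b))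
    ++ map (addn n) (drop h b).

Lemma all_iota (P : pred nat) a c : (forall x, a <= x < a + c -> P x) -> all P (iota a c).
Proof. by move=> H; apply/allP => x; rewrite mem_iota => /H. Qed.

Lemma map_addn_iota n h : map (addn n) (iota 0 h) = iota n h.
Proof. by rewrite -(addn0 n) iotaDl addn0. Qed.

Section Extension.

Variables (n tau : nat) (pre b : seq nat) (h : nat) (mm : seq bool).
Hypothesis pre_top : perm_eq (pre ++ iota (n - tau) tau) (iota 0 n).
Hypothesis tau_le : tau <= n.
Hypothesis b_perm : perm_eq b (iota 0 8).
Hypothesis h_le : h <= 8.
Hypothesis b_head : take h b = iota 0 h.
Hypothesis mm_mask : mm \in shuffle_masks tau h.

Local Notation A := (iota (n - tau) tau).
Local Notation B := (iota n h).
Local Notation post := (map (addn n) (drop h b)).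
Local Notation s := (pre ++ shuffle mm A B ++ post).

Lemma extendE : extend n (pre ++ A) tau b h mm = s.
Proof.
have size_pre : size pre = n - tau.
  by have := perm_size pre_top; rewrite size_cat !size_iota => <-; rewrite addnK.
by rewrite /extend take_size_cat ?drop_size_cat // b_head map_addn_iota.
Qed.

Lemma mem_old x : (x \in pre ++ A) = (x < n).
Proof. by rewrite (perm_mem pre_top) mem_iota. Qed.

Lemma pre_lt x : x \in pre -> x < n.
Proof. by move=> xi; rewrite -mem_old mem_cat xi. Qed.

Lemma post_ge x : x \in post -> n <= x.
Proof. by case/mapP => y _ ->; rewrite leq_addr. Qed.

Lemma A_notin_pre x : x \in A -> x \notin pre.
Proof.
move=> xA; apply/negP => xp; have := perm_uniq pre_top; rewrite iota_uniq cat_uniq.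
by case/and3P=> _ /hasPn/(_ x xA); rewrite xp.
Qed.

Lemma new_cat : B ++ post = map (addn n) b.
Proof. by rewrite -(map_addn_iota n h) -b_head -map_cat cat_take_drop. Qed.

Lemma perm_extend : perm_eq s (iota 0 (n + 8)).
Proof.
have -> : iota 0 (n + 8) = iota 0 n ++ map (addn n) (iota 0 8).
  by rewrite iotaD map_addn_iota.
apply: (@perm_trans _ (pre ++ (A ++ B) ++ post)).
  by rewrite perm_cat2l perm_cat2r perm_shuffle.
have -> : pre ++ (A ++ B) ++ post = (pre ++ A) ++ (B ++ post) by rewrite !catA.
by rewrite new_cat; apply: perm_cat => //; apply: perm_map.
Qed.

Lemma mem_extend x : (x \in s) = (x < n + 8).
Proof. by rewrite (perm_mem perm_extend) mem_iota. Qed.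

Lemma filter_extend_old : filter (fun z => z < n) s = pre ++ A.
Proof.
rewrite !filter_cat (all_filterP _) ?filter_shufflel ?filter_all_predC ?cats0 //.
- by apply/allP => x /post_ge /=; rewrite -leqNgt.
- by apply: all_iota => x /=; lia.
- by apply: all_iota => x /=; lia.
- by apply/allP => x /pre_lt.
Qed.

Lemma filter_extend_new : filter (fun z => n <= z) s = map (addn n) b.
Proof.
rewrite !filter_cat filter_all_predC ?filter_shuffler ?(all_filterP _) /= ?new_cat //.
- by apply/allP => x /post_ge.
- by apply: all_iota => x /=; lia.
- by apply: all_iota => x /=; lia.
- by apply/allP => x /pre_lt /=; rewrite -ltnNge.
Qed.

Lemma before_extend_old x y : x < n -> y < n -> before s x y = before (pre ++ A) x y.
Proof. by move=> xn yn; rewrite -(@before_filter (fun z => z < n)) // filter_extend_old. Qed.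

Lemma before_extend_new x y : before s (n + x) (n + y) = before b x y.
Proof.
rewrite -(@before_filter (fun z => n <= z)) ?leq_addr // filter_extend_new.
by rewrite before_map //; apply: addnI.
Qed.

Lemma before_extend_new_old x y :
  x < n -> n <= y < n + 8 -> before s y x -> (x \in A) /\ (y \in B).
Proof.
move=> xn yn yx; split.
- apply/negPn/negP => xA.
  have xp : x \in pre by move: (mem_old x); rewrite xn mem_cat (negbTE xA) orbF.
  have yp : y \notin pre by apply/negP => /pre_lt; lia.
  by move: (before_asym yx); rewrite (before_cat_mem _ xp yp).
- apply/negPn/negP => yB.
  have yps : y \notin pre ++ shuffle mm A B.
    rewrite mem_cat negb_or (perm_mem (perm_shuffle _ _ _)) mem_cat negb_or yB andbT.
    by rewrite mem_iota; apply/andP; split; [apply/negP => /pre_lt|]; lia.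
  have xps : x \in pre ++ shuffle mm A B.
    by rewrite mem_cat (perm_mem (perm_shuffle _ _ _)) mem_cat orbA -mem_cat mem_old xn.
  by move: (before_asym yx); rewrite catA (before_cat_mem _ xps yps).
Qed.

Lemma respects_extend (old inner : nat -> nat -> nat -> bool) :
  (forall i j k, i < j < k -> k < n -> respects (pre ++ A) i j k (old i j k)) ->
  (forall i j k, i < j < k -> k < 8 -> respects b i j k (inner i j k)) ->
  forall i j k, i < j < k -> k < n + 8 ->
  respects s i j k (if n <= i then inner (i - n) (j - n) (k - n)
                    else if k < n then old i j k else j < n).
Proof.
move=> old_ok inner_ok i j k ijk kn.
case: (leqP n i) => [ni | lt_in] /=.
  have -> : i = n + (i - n) by lia.
  have -> : j = n + (j - n) by lia.
  have -> : k = n + (k - n) by lia.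
  by rewrite /respects !before_extend_new !addKn; apply: inner_ok; lia.
case: (ltnP k n) => [lt_kn | le_nk] /=.
  by rewrite /respects !before_extend_old //; try lia; apply: old_ok.
have kr : n <= k < n + 8 by lia.
case: (ltnP j n) => [lt_jn | le_nj] /=; rewrite /respects.
  apply/negP => /andP[ji ki].
  have [iA _] := before_extend_new_old lt_in kr ki.
  have jA : j \in A by move: iA; rewrite !mem_iota; lia.
  move: (before_asym ji); rewrite before_extend_old ?before_catr ?A_notin_pre //.
  by move: iA jA; rewrite !mem_iota => iA jA; rewrite before_iota //; lia.
case ik: (before s i k) => //=.
have ki : before s k i.
  by have := @before_total s i k; rewrite !mem_extend ik /=; apply; lia.
have [_] := before_extend_new_old lt_in kr ki; rewrite mem_iota => kB.
have -> : j = n + (j - n) by lia.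
have -> : k = n + (k - n) by lia.
by rewrite before_extend_new -(cat_take_drop h b) before_catl b_head ?mem_iota ?before_iota //; lia.
Qed.

Lemma extend_top_tail_post t :
  h < 8 -> h + t < 8 -> drop (8 - t) b = iota (8 - t) t -> top_tail (n + 8) t s.
Proof.
move=> h8 ht b_tail.
have e : drop h b = take (8 - t - h) (drop h b) ++ drop (8 - t) b.
  by rewrite -{1}(cat_take_drop (8 - t - h) (drop h b)) drop_drop subnK //; lia.
exists (pre ++ shuffle mm A B ++ map (addn n) (take (8 - t - h) (drop h b))).
rewrite {1}e b_tail map_cat -!catA -iotaDl; congr (_ ++ _ ++ _ ++ iota _ _); lia.
Qed.

Lemma extend_top_tail_full :
  h = 8 -> mm = nseq tau false ++ nseq 8 true -> top_tail (n + 8) (tau + 8) s.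
Proof.
move=> h8 ->; have -> : drop h b = [::] by rewrite drop_oversize // (perm_size b_perm) size_iota h8.
have -> : nseq tau false = nseq (size A) false by rewrite size_iota.
rewrite shuffle_nseq_false shuffle_nseq_true h8 cats0.
exists pre; have -> : n + 8 - (tau + 8) = n - tau by lia.
by rewrite iotaD subnK.
Qed.

Lemma extend_top_tail_mask : h = 8 -> top_tail (n + 8) (trailing_trues mm) s.
Proof.
move=> h8; have -> : drop h b = [::] by rewrite drop_oversize // (perm_size b_perm) size_iota h8.
have [cA cB] := mem_shuffle_masks mm_mask.
set j := trailing_trues mm; set m1 := rev (drop j (rev mm)).
have em : mm = m1 ++ nseq j true by apply: trailing_truesE.
have c1 : count negb m1 = tau by move: cA; rewrite em count_cat count_nseq_true addn0.
have c2 : count idfun m1 + j = 8 by move: cB; rewrite em count_cat count_nseq_true mul1n h8.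
rewrite em shuffle_cat ?size_iota ?c1 //; last lia.
rewrite (drop_oversize (s := A)) ?size_iota // shuffle_nseq_true h8 drop_iota cats0 catA.
by eexists; congr (_ ++ iota _ _); lia.
Qed.

Lemma extend_top_tail t : t <= 8 -> (h < 8 -> h + t < 8) -> drop (8 - t) b = iota (8 - t) t ->
  top_tail (n + 8) (next_tail tau h t mm) s.
Proof.
move=> t8 ht b_tail; rewrite /next_tail; case: ifP => h8.
  apply: (top_tail_shorten (u := t)); [exact: geq_minr | lia |].
  by apply: extend_top_tail_post; auto.
have {}h8 : h = 8 by lia.
case: eqP => em.
  apply: (top_tail_shorten (u := tau + 8)); [exact: geq_minr | lia |].
  exact: extend_top_tail_full.
have [_ cB] := mem_shuffle_masks mm_mask.
have j8 : trailing_trues mm <= 8.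
  by rewrite -h8 -cB {2}(trailing_truesE mm) count_cat count_nseq_true mul1n leq_addl.
apply: (top_tail_shorten (u := trailing_trues mm)); [exact: geq_minr | lia |].
exact: extend_top_tail_mask.
Qed.

End Extension.

Definition respects_rule (rule : nat -> nat -> nat -> bool) p :=
  all (fun k => all (fun j => all (fun i => respects p i j k (rule i j k))
    (iota 0 j)) (iota 0 k)) (iota 0 (size p)).

Fixpoint insertions (x : nat) (s : seq nat) : seq (seq nat) :=
  if s is y :: s' then (x :: s) :: map (cons y) (insertions x s') else [:: [:: x]].

Lemma perm_insertions x s q : q \in insertions x s -> perm_eq q (x :: s).
Proof.
elim: s q => [|y s IH] q /=; first by rewrite inE => /eqP ->.
rewrite inE => /orP[/eqP -> //|/mapP[q' /IH q'xs ->]].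
rewrite -(perm_cons y) in q'xs; apply: perm_trans q'xs _.
by rewrite -[y :: x :: s]/([:: y] ++ [:: x] ++ s) perm_catCA.
Qed.

(* The orders of [0, n) obeying [rule], found by inserting the alternatives one
   at a time and pruning (restrictions of such orders obey the rule as well). *)
Fixpoint rule_orders rule n : seq (seq nat) :=
  if n is n'.+1 then
    [seq p <- flatten [seq insertions n' p | p <- rule_orders rule n'] | respects_rule rule p]
  else [:: [::]].

Lemma mem_rule_orders rule n p : p \in rule_orders rule n ->
  perm_eq p (iota 0 n) /\
  forall i j k, i < j < k -> k < n -> respects p i j k (rule i j k).
Proof.
have perm_p : p \in rule_orders rule n -> perm_eq p (iota 0 n).
  elim: n p => [|n IH] p /=; first by rewrite inE => /eqP ->.
  rewrite mem_filter => /andP[_ /flatten_mapP[q /IH q_perm /perm_insertions pq]].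
  apply: perm_trans pq _.
  by rewrite -[0 :: _]/(iota 0 n.+1) -(addn1 n) iotaD perm_sym perm_catC /= perm_cons perm_sym.
move=> pR; split; first exact: perm_p.
have size_p : size p = n by rewrite (perm_size (perm_p pR)) size_iota.
case: n pR size_p {perm_p} => [|n]; first by move=> *; lia.
rewrite /= mem_filter => /andP[ok _] size_p i j k /andP[ij jk] kn.
move: ok; rewrite /respects_rule size_p => /allP/(_ k); rewrite mem_iota => /(_ kn).
by move=> /allP/(_ j); rewrite mem_iota => /(_ jk) /allP/(_ i); rewrite mem_iota; apply.
Qed.

Definition block_rule := concat_rule 4 (concat_rule 2 (fun _ _ _ => true) 0 2) 0 2.
Definition block_orders := rule_orders block_rule 8.

Lemma uniq_block_orders : uniq block_orders.
Proof. by vm_compute. Qed.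

Definition block_head (b : seq nat) := find (fun k => nth 0 b k != k) (iota 0 8).
Definition block_tail (b : seq nat) := find (fun k => nth 0 b (7 - k) != 7 - k) (iota 0 8).

Lemma block_orders_shape : all (fun b =>
    [&& take (block_head b) b == iota 0 (block_head b),
        drop (8 - block_tail b) b == iota (8 - block_tail b) (block_tail b)
      & (block_head b < 8) ==> (block_head b + block_tail b < 8)]) block_orders.
Proof. by vm_compute. Qed.

Lemma block_ordersP b : b \in block_orders ->
  [/\ perm_eq b (iota 0 8), block_head b <= 8, take (block_head b) b = iota 0 (block_head b),
      block_tail b <= 8 &
      drop (8 - block_tail b) b = iota (8 - block_tail b) (block_tail b)
      /\ (block_head b < 8 -> block_head b + block_tail b < 8)].
Proof.
move=> bB; have [b_perm _] := mem_rule_orders bB.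
have /and3P[/eqP b_head /eqP b_tail /implyP ht] := allP block_orders_shape b bB.
by split => //; apply: find_size.
Qed.

Lemma block_orders_respect b i j k : b \in block_orders ->
  i < j < k -> k < 8 -> respects b i j k (block_rule i j k).
Proof. by case/mem_rule_orders=> _; apply. Qed.

Definition weight t := nth 0 [:: 3; 6; 11; 19; 33; 57; 97; 163; 269; 435; 690] t.

Lemma weight_le t : weight t <= 690.
Proof.
rewrite /weight; case: (ltnP t 11) => [|t_ge]; last by rewrite nth_default.
by move: t; do 11! case=> //.
Qed.

Definition children_weight tau :=
  sumn [seq sumn [seq weight (next_tail tau (block_head b) (block_tail b) m)
                 | m <- shuffle_masks tau (block_head b)] | b <- block_orders].

Lemma weight_growth t : t <= cap -> 544 * weight t <= children_weight t.
Proof.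
have growth : all (fun t => 544 * weight t <= children_weight t) (iota 0 cap.+1).
  by vm_compute.
by move=> t_cap; apply: (allP growth); rewrite mem_iota.
Qed.

Definition chain_rule r m := concat_rule 8 block_rule r m.

Definition extend_all n (S : seq (seq nat * nat)) : seq (seq nat * nat) :=
  flatten [seq flatten [seq
    [seq (extend n p.1 p.2 b (block_head b) m, next_tail p.2 (block_head b) (block_tail b) m)
      | m <- shuffle_masks p.2 (block_head b)] | b <- block_orders] | p <- S].

(* Orders of [r + 8 m] alternatives, each paired with the length of its top tail. *)
Fixpoint chain r m : seq (seq nat * nat) :=
  if m is m'.+1 then extend_all (r + 8 * m') (chain r m') else [:: (iota 0 r, 0)].

Definition chain_inv N rule (p : seq nat * nat) :=
  [/\ perm_eq p.1 (iota 0 N), p.2 <= cap, top_tail N p.2 p.1 &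
      forall i j k, i < j < k -> k < N -> respects p.1 i j k (rule i j k)].

Lemma chain_inv_split N rule (p : seq nat * nat) : chain_inv N rule p ->
  exists2 pre, p.1 = pre ++ iota (N - p.2) p.2 &
    [/\ perm_eq (pre ++ iota (N - p.2) p.2) (iota 0 N), p.2 <= N &
        forall i j k, i < j < k -> k < N ->
          respects (pre ++ iota (N - p.2) p.2) i j k (rule i j k)].
Proof.
case=> p_perm _ [pre p_eq] p_rule; exists pre => //; rewrite -p_eq; split => //.
by have := perm_size p_perm; rewrite p_eq size_cat !size_iota => <-; rewrite leq_addl.
Qed.

Lemma chain_invP r m p : p \in chain r m -> chain_inv (r + 8 * m) (chain_rule r m) p.
Proof.
elim: m p => [|m IH] p.
  rewrite inE => /eqP ->; rewrite /chain_inv muln0 addn0 /=; split => //.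
    by exists (iota 0 r); rewrite cats0.
  move=> i j k /andP[ij jk] kr; apply/negP => /andP[ji _].
  by move: ji; rewrite before_iota; lia.
case/flatten_mapP => q /IH q_inv /flatten_mapP[b bB /mapP[mm mmM ->]].
have [b_perm b_h b_head b_t [b_tail ht]] := block_ordersP bB.
have [pre q_eq [pre_top tau_le q_rule]] := chain_inv_split q_inv.
set n := r + 8 * m in q_eq pre_top tau_le q_rule *.
have -> : r + 8 * m.+1 = n + 8 by rewrite /n mulnS; lia.
rewrite q_eq extendE //; split => /=.
- exact: perm_extend.
- exact: geq_minl.
- exact: extend_top_tail.
- move=> i j k ijk kn; apply: (respects_extend pre_top) => // i' j' k' *.
  exact: block_orders_respect.
Qed.

Lemma uniq_flatten_map (T U V K : eqType) (f : U -> V) (l : seq T) (F : T -> seq U)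
    (key : V -> K) (kl : T -> K) :
  uniq (map kl l) -> (forall x, x \in l -> uniq (map f (F x))) ->
  (forall x y, x \in l -> y \in F x -> key (f y) = kl x) ->
  uniq (map f (flatten (map F l))).
Proof.
elim: l => [|x l IH] //= /andP[kx ul] F_uniq F_key.
rewrite map_cat cat_uniq F_uniq ?mem_head //= IH //; first last.
- by move=> z y zl; apply: F_key; rewrite inE zl orbT.
- by move=> z zl; apply: F_uniq; rewrite inE zl orbT.
rewrite andbT; apply/hasPn => v /mapP[y /flatten_mapP[z zl yz] ->].
apply/mapP => -[y' y'F e].
have e2 : key (f y) = kl z by apply: F_key => //; rewrite inE zl orbT.
by move: kx; rewrite -(F_key x y' (mem_head _ _) y'F) -e e2 (map_f kl zl).
Qed.

Lemma uniq_chain r m : uniq (map fst (chain r m)).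
Proof.
(* Children of distinct parents differ on the old alternatives, those of distinct
   blocks on the new ones, and those of distinct masks in the shuffled part. *)
elim: m => [|m IH] //=; set n := r + 8 * m.
apply: (uniq_flatten_map (key := filter (fun z => z < n)) (kl := fst)) => //.
- move=> p pS; have [pre -> [pre_top tau_le _]] := chain_inv_split (chain_invP pS).
  apply: (uniq_flatten_map (key := fun s => map (subn^~ n) (filter (fun z => n <= z) s))
                           (kl := idfun)); first by rewrite map_id uniq_block_orders.
  + move=> b bB; have [b_perm b_h b_head _ _] := block_ordersP bB.
    rewrite -map_comp map_inj_in_uniq ?uniq_shuffle_masks // => m1 m2 m1M m2M /=.
    rewrite !extendE //.
    have [c1 d1] := mem_shuffle_masks m1M; have [c2 d2] := mem_shuffle_masks m2M.
    apply: (shuffle_inj_mask (P := fun z => n <= z)); rewrite ?size_iota //.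
    * by apply: all_iota => z /=; lia.
    * by apply: all_iota => z /=; lia.
  + move=> b y bB /mapP[mm mmM ->] /=.
    have [b_perm b_h b_head _ _] := block_ordersP bB.
    rewrite extendE // filter_extend_new // -map_comp.
    by rewrite (eq_map (g := idfun)) ?map_id // => z /=; rewrite addKn.
- move=> p y pS /flatten_mapP[b bB /mapP[mm mmM ->]] /=.
  have [pre -> [pre_top tau_le _]] := chain_inv_split (chain_invP pS).
  have [b_perm b_h b_head _ _] := block_ordersP bB.
  by rewrite extendE // filter_extend_old.
Qed.

Definition potential (S : seq (seq nat * nat)) := \sum_(p <- S) weight p.2.

Lemma potential_extend_all n S :
  potential (extend_all n S) = \sum_(p <- S) children_weight p.2.
Proof.
rewrite /potential /extend_all big_flatten big_map; apply: eq_bigr => p _.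
rewrite big_flatten big_map /children_weight sumnE big_map; apply: eq_bigr => b _.
by rewrite big_map sumnE big_map.
Qed.

Lemma potential_chain r m : 3 * 544 ^ m <= potential (chain r m).
Proof.
elim: m => [|m IH]; first by rewrite /potential big_cons big_nil.
rewrite [chain r m.+1]/= potential_extend_all expnS mulnCA.
apply: leq_trans (leq_mul (leqnn 544) IH) _.
rewrite /potential big_distrr /= big_seq [X in _ <= X]big_seq.
by apply: leq_sum => p /chain_invP[_ p_cap _ _]; apply: weight_growth.
Qed.

Lemma potential_le_size S : potential S <= 690 * size S.
Proof.
elim: S => [|p S IH]; first by rewrite /potential big_nil.
by rewrite /potential big_cons /= mulnS leq_add // weight_le.
Qed.

(* The ranks [x |-> index x s] as a permutation of ['I_n]; the identity serves as
   a junk value when [s] does not list [0, n) exactly once. *)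
Definition rank_of n (s : seq nat) (x : 'I_n) : 'I_n := insubd x (index (val x) s).
Definition rank_fun n s (x : 'I_n) : 'I_n :=
  if injectiveb (@rank_of n s) then rank_of s x else x.

Lemma rank_fun_inj n s : injective (@rank_fun n s).
Proof. by rewrite /rank_fun; case: injectiveP => [inj|_] x y //; apply: inj. Qed.

Definition perm_of_seq n s : {perm 'I_n} := perm (@rank_fun_inj n s).

Lemma perm_of_seqE n s (x : 'I_n) :
  perm_eq s (iota 0 n) -> val (perm_of_seq n s x) = index (val x) s.
Proof.
move=> s_perm.
have mem_s (y : 'I_n) : val y \in s by rewrite (perm_mem s_perm) mem_iota /=.
have index_lt (y : 'I_n) : index (val y) s < n.
  by rewrite -[X in _ < X](size_iota 0 n) -(perm_size s_perm) index_mem.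
have inj : injectiveb (@rank_of n s).
  apply/injectiveP => a b /(congr1 val); rewrite /rank_of !val_insubd !index_lt => e.
  exact/val_inj/(index_inj 0 (mem_s a) (mem_s b) e).
by rewrite permE /rank_fun inj /rank_of val_insubd index_lt.
Qed.

Lemma perm_of_seq_lt n s (x y : 'I_n) :
  perm_eq s (iota 0 n) -> (perm_of_seq n s x < perm_of_seq n s y) = before s x y.
Proof. by move=> s_perm; rewrite /before -!(perm_of_seqE _ s_perm). Qed.

Lemma perm_of_seq_inj n s1 s2 : perm_eq s1 (iota 0 n) -> perm_eq s2 (iota 0 n) ->
  perm_of_seq n s1 = perm_of_seq n s2 -> s1 = s2.
Proof.
move=> s1_perm s2_perm e.
have size_s1 : size s1 = n by rewrite (perm_size s1_perm) size_iota.
apply: (@eq_from_nth _ 0) => [|i i_lt]; first by rewrite size_s1 (perm_size s2_perm) size_iota.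
have x_s1 : nth 0 s1 i \in s1 by apply: mem_nth.
have x_lt : nth 0 s1 i < n by move: x_s1; rewrite (perm_mem s1_perm) mem_iota.
have x_s2 : nth 0 s1 i \in s2 by rewrite (perm_mem s2_perm) mem_iota.
have := perm_of_seqE (Ordinal x_lt) s1_perm; rewrite e (perm_of_seqE _ s2_perm) /=.
rewrite index_uniq ?(perm_uniq s1_perm) ?iota_uniq // => index_x.
by rewrite -[in RHS]index_x nth_index.
Qed.

Lemma sub_in_count (T : eqType) (a b : pred T) (s : seq T) :
  {in s, subpred a b} -> count a s <= count b s.
Proof.
elim: s => [|t s IH] //= ab; apply: leq_add.
  by case a_t: (a t) => //; rewrite (ab t (mem_head _ _) a_t).
by apply: IH => u us; apply: ab; rewrite inE us orbT.
Qed.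

Section Condorcet.

Variable n : nat.
Implicit Types (P : seq {perm 'I_n}) (x y z e u v : 'I_n).

Lemma perm_ltNge (s : {perm 'I_n}) x y : x != y -> (s x < s y) = ~~ (s y < s x).
Proof. by move=> xy; case: ltngtP => // /val_inj /perm_inj exy; rewrite exy eqxx in xy. Qed.

Lemma nabove_sum P x y : x != y -> nabove P x y + nabove P y x = size P.
Proof.
move=> xy; elim: P => [|s P IH] //=; rewrite /nabove /= -!/(nabove _ _ _).
by rewrite (perm_ltNge s xy); case: (s y < s x) => /=; lia.
Qed.

(* If [e] is never the best of [e, u, v], every voter preferring [e] to [u]
   prefers [v] to [u], so [e] beating [u] forces [v] to beat [u]. *)
Lemma no_cycle_never_first P e u v : e != u -> u != v -> v != e ->
  (forall s, s \in P -> ~~ ((s e < s u) && (s e < s v))) ->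
  majority P e u -> majority P u v -> False.
Proof.
move=> eu uv ve never_first eu_maj uv_maj.
have : nabove P e u <= nabove P v u.
  apply: sub_in_count => s sP /= eu_s; have := never_first s sP.
  rewrite eu_s (perm_ltNge s (x := e)) ?negbK; last by rewrite eq_sym.
  by move/ltn_trans; apply.
have := nabove_sum P eu; have := nabove_sum P uv; move: eu_maj uv_maj; rewrite /majority; lia.
Qed.

Lemma no_cycle_never_last P e u v : e != u -> u != v -> v != e ->
  (forall s, s \in P -> ~~ ((s u < s e) && (s v < s e))) ->
  majority P u v -> majority P v e -> False.
Proof.
move=> eu uv ve never_last uv_maj ve_maj.
have : nabove P v e <= nabove P v u.
  apply: sub_in_count => s sP /= ve_s; have := never_last s sP.
  rewrite ve_s andbT (perm_ltNge s (x := u)) ?negbK; last by rewrite eq_sym.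
  exact: ltn_trans.
have := nabove_sum P ve; have := nabove_sum P uv; move: ve_maj uv_maj; rewrite /majority; lia.
Qed.

Lemma tpos_perm (s : {perm 'I_n}) a b c a' b' c' e :
  perm_eq [:: a; b; c] [:: a'; b'; c'] -> tpos s a b c e = tpos s a' b' c' e.
Proof.
have tposE a1 b1 c1 : tpos s a1 b1 c1 e = 1 + count (fun w => s w < s e) [:: a1; b1; c1].
  by rewrite /tpos /= addn0 !addnA.
by rewrite !tposE => /seq.permP ->.
Qed.

Lemma no_cycle_never P x y z p : x != y -> y != z -> z != x ->
  majority P x y -> majority P y z -> majority P z x -> (p == 1) || (p == 3) ->
  (forall s, s \in P -> tpos s x y z x != p) -> False.
Proof.
move=> xy yz zx xy_maj yz_maj zx_maj /orP[] /eqP -> never.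
- apply: (no_cycle_never_first xy yz zx _ xy_maj yz_maj) => s sP.
  have := never s sP; rewrite /tpos ltnn.
  by case: (ltngtP (s x) (s y)); case: (ltngtP (s x) (s z)) => //=; lia.
- apply: (no_cycle_never_last xy yz zx _ yz_maj zx_maj) => s sP.
  by have := never s sP; rewrite /tpos ltnn; case: (s y < s x); case: (s z < s x).
Qed.

Lemma no_cycle_never_mem P x y z e p : x != y -> y != z -> z != x ->
  majority P x y -> majority P y z -> majority P z x -> (p == 1) || (p == 3) ->
  e \in [:: x; y; z] -> (forall s, s \in P -> tpos s x y z e != p) -> False.
Proof.
move=> xy yz zx xy_maj yz_maj zx_maj p13; rewrite !inE => /or3P[] /eqP -> never.
- exact: (no_cycle_never xy yz zx xy_maj yz_maj zx_maj p13 never).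
- apply: (no_cycle_never yz zx xy yz_maj zx_maj xy_maj p13) => s sP.
  by rewrite (@tpos_perm _ _ _ _ x y z) ?never // -[[:: y; z; x]]/(rot 1 [:: x; y; z]) perm_rot.
- apply: (no_cycle_never zx xy yz zx_maj xy_maj yz_maj p13) => s sP.
  by rewrite (@tpos_perm _ _ _ _ x y z) ?never // -[[:: z; x; y]]/(rot 2 [:: x; y; z]) perm_rot.
Qed.

Lemma peak_pit_condorcet (D : domain n) : peak_pit D -> condorcet D.
Proof.
move=> pp P odd_P P_D x y z xy_maj yz_maj.
case xz_maj: (majority P x z) => //; exfalso.
have xy : x != y by apply: contraTneq xy_maj => ->; rewrite /majority ltnn.
have yz : y != z by apply: contraTneq yz_maj => ->; rewrite /majority ltnn.
have zx : z != x.
  by apply/eqP => ezx; move: xy_maj yz_maj; rewrite ezx /majority => /ltn_trans h /h; rewrite ltnn.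
have zx_maj : majority P z x.
  have := nabove_sum P zx; move: xz_maj odd_P; rewrite /majority => + + sum_P.
  rewrite -sum_P; case: (ltngtP (nabove P x z) (nabove P z x)) => // -> _.
  by rewrite addnn odd_double.
set L := sort (fun a b : 'I_n => a <= b) [:: x; y; z].
have L_perm : perm_eq L [:: x; y; z] by rewrite /L perm_sort.
have L_sorted : sorted (fun a b : 'I_n => a <= b) L by apply: sort_sorted => a b; apply: leq_total.
have L_uniq : uniq L by rewrite (perm_uniq L_perm) /= !inE negb_or xy (eq_sym x z) zx yz.
move: L_perm L_sorted L_uniq.
case: L => [|a [|b [|c [|d L]]]] // L_perm; try by move: (perm_size L_perm).
move=> /= /and3P[ab bc _] /and3P[]; rewrite !inE negb_or => /andP[nab _] nbc _.
have lt_ab : a < b by rewrite ltn_neqAle ab andbT; apply: contra nab => /eqP e; apply/eqP/val_inj.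
have lt_bc : b < c by rewrite ltn_neqAle bc andbT; apply: contra nbc => /eqP e; apply/eqP/val_inj.
have [k [k13 k_never]] := pp a b c lt_ab lt_bc.
have k_mem : tnth3 a b c k \in [:: x; y; z].
  rewrite -(perm_mem L_perm) /tnth3; case: ifP => _; first exact: mem_head.
  by case: ifP => _; rewrite !inE eqxx ?orbT.
have never_in (p : nat) :
    never D a b c k p -> forall s, s \in P -> tpos s x y z (tnth3 a b c k) != p.
  by move=> nv s sP; rewrite -(tpos_perm _ _ L_perm); apply/eqP/nv/(allP P_D).
case: k_never => /never_in never.
- exact: (no_cycle_never_mem xy yz zx xy_maj yz_maj zx_maj (p := 3) _ k_mem never).
- exact: (no_cycle_never_mem xy yz zx xy_maj yz_maj zx_maj (p := 1) _ k_mem never).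
Qed.

End Condorcet.

Definition chain_orders n := map fst (chain (n %% 8) (n %/ 8)).

Definition chain_domain n : domain n := [set s in map (perm_of_seq n) (chain_orders n)].

Lemma chain_ordersP n s : s \in chain_orders n ->
  perm_eq s (iota 0 n) /\
  forall i j k, i < j < k -> k < n -> respects s i j k (chain_rule (n %% 8) (n %/ 8) i j k).
Proof.
case/mapP => p /chain_invP[p_perm _ _ p_rule] ->.
by rewrite mulnC addnC -divn_eq in p_perm p_rule.
Qed.

Lemma card_chain_domain n : #|chain_domain n| = size (chain (n %% 8) (n %/ 8)).
Proof.
rewrite cardsE; have /card_uniqP -> : uniq (map (perm_of_seq n) (chain_orders n)).
  rewrite map_inj_in_uniq ?uniq_chain // => s1 s2.
  move=> /chain_ordersP[s1_perm _] /chain_ordersP[s2_perm _].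
  exact: perm_of_seq_inj.
by rewrite !size_map.
Qed.

Lemma chain_domain_peak_pit n : peak_pit (chain_domain n).
Proof.
move=> a b c ab bc.
have rule_abc s : s \in chain_orders n ->
    respects s a b c (chain_rule (n %% 8) (n %/ 8) a b c).
  by case/chain_ordersP => _; apply; rewrite ?ab.
case: (chain_rule _ _ a b c) rule_abc => rule_abc.
- exists 1; split => //; left => s; rewrite inE => /mapP[t tC ->].
  have [t_perm _] := chain_ordersP tC; have := rule_abc t tC.
  rewrite /respects /tpos /tnth3 /= !perm_of_seq_lt // before_irr.
  by case: (before t b a); case: (before t c a).
- exists 3; split => //; right => s; rewrite inE => /mapP[t tC ->].
  have [t_perm _] := chain_ordersP tC; have := rule_abc t tC.
  rewrite /respects /tpos /tnth3 /= !perm_of_seq_lt // before_irr.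
  by case: (before t a c); case: (before t b c).
Qed.

Lemma h_max_ge_chain n : size (chain (n %% 8) (n %/ 8)) <= h_max n.
Proof.
rewrite -card_chain_domain /h_max.
apply: (leq_bigmax_cond (P := fun D : domain n => `[< condorcet D /\ peak_pit D >])).
apply/asboolP; split; [apply: peak_pit_condorcet|]; exact: chain_domain_peak_pit.
Qed.

Lemma h_max_le_f_max n : h_max n <= f_max n.
Proof.
rewrite /h_max; apply/bigmax_leqP => D /asboolP[cD _].
by apply: (leq_bigmax_cond (P := fun D : domain n => `[< condorcet D >])); apply/asboolP.
Qed.

Lemma h_max_lower_bound n : 3 * 544 ^ (n %/ 8) <= 690 * h_max n.
Proof.
apply: leq_trans (potential_chain (n %% 8) _) _; apply: leq_trans (potential_le_size _) _.
by rewrite leq_mul2l h_max_ge_chain orbT.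
Qed.

Local Open Scope R_scope.

Lemma INR_expn m k : INR (m ^ k)%N = INR m ^ k.
Proof. by elim: k => [|k IH] //; rewrite expnS -multE mult_INR IH. Qed.

Lemma h_max_lower_boundR n : 3 / 690 * 544 ^ (n %/ 8) <= INR (h_max n).
Proof.
have /leP/le_INR := h_max_lower_bound n.
rewrite -!multE !mult_INR INR_expn !INR_IZR_INZ /=; lra.
Qed.

Lemma pow_le_divn (x : R) p n : (0 < p)%N -> 1 <= x -> x ^ n <= (x ^ p) ^ (n %/ p) * x ^ p.-1.
Proof.
move=> p_gt0 x_ge1.
rewrite {1}(divn_eq n p) -plusE -multE pow_add Nat.mul_comm pow_mult.
apply: Rmult_le_compat_l; first by do 2 apply: pow_le; lra.
by apply: Rle_pow => //; apply/leP; rewrite -ltnS prednK // ltn_pmod.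
Qed.

Section GeometricGrowth.

Variables (a : nat -> R) (c B x : R) (p : nat).
Hypotheses (p_gt0 : (0 < p)%N) (c_gt0 : 0 < c) (x_ge1 : 1 <= x).
Hypothesis a_ge : forall n, c * B ^ (n %/ p) <= a n.

Lemma geometric_lower_bound : x ^ p <= B -> forall n, c / x ^ p.-1 * x ^ n <= a n.
Proof.
move=> xB n; apply: Rle_trans (a_ge n).
have xp_gt0 : 0 < x ^ p.-1 by apply: pow_lt; lra.
have /(Rmult_le_compat_l (c / x ^ p.-1)) := pow_le_divn n p_gt0 x_ge1.
have -> : c / x ^ p.-1 * ((x ^ p) ^ (n %/ p) * x ^ p.-1) = c * (x ^ p) ^ (n %/ p).
  by field; lra.
move=> /(_ (Rlt_le _ _ (Rdiv_lt_0_compat _ _ c_gt0 xp_gt0))) le_n; apply: Rle_trans le_n _.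
by apply/Rmult_le_compat_l/pow_incr; [lra | split => //; apply: pow_le; lra].
Qed.

(* With [rho := B / x ^ p > 1], the gain [rho ^ q >= 1 + q (rho - 1)] (Bernoulli)
   eventually beats the constant [x ^ p.-1 / c]. *)
Lemma geometric_eventually_above : x ^ p < B -> exists N, forall n, (N <= n)%N -> x ^ n < a n.
Proof.
move=> xB; have xp_gt0 : 0 < x ^ p by apply: pow_lt; lra.
have x1_gt0 : 0 < x ^ p.-1 by apply: pow_lt; lra.
set rho := B / x ^ p.
have rho_gt1 : 1 < rho by apply: (Rmult_lt_reg_r (x ^ p)); rewrite // /rho; field_simplify; lra.
have [Q Q_big] := INR_unbounded (x ^ p.-1 / (c * (rho - 1))).
exists (p * Q)%N => n le_n; set q := (n %/ p)%N.
have le_Qq : INR Q <= INR q by apply/le_INR/leP; rewrite /q leq_divRL // mulnC.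
have B_q : B ^ q = (x ^ p) ^ q * rho ^ q.
  by rewrite -Rpow_mult_distr /rho; congr (_ ^ _); field; lra.
have bern := poly q (rho - 1) ltac:(lra); rewrite Rplus_minus in bern.
have x1_lt : x ^ p.-1 < c * rho ^ q.
  have : x ^ p.-1 / (c * (rho - 1)) * (c * (rho - 1)) < INR q * (c * (rho - 1)).
    by apply: Rmult_lt_compat_r; [apply: Rmult_lt_0_compat | ]; lra.
  have -> : x ^ p.-1 / (c * (rho - 1)) * (c * (rho - 1)) = x ^ p.-1.
    by field; split; lra.
  have := Rmult_le_compat_l c _ _ (Rlt_le _ _ c_gt0) bern; lra.
apply: Rle_lt_trans (pow_le_divn n p_gt0 x_ge1) _; apply: Rlt_le_trans (a_ge n).
rewrite -/q B_q -Rmult_assoc (Rmult_comm c) Rmult_assoc.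
by apply: Rmult_lt_compat_l => //; apply: pow_lt.
Qed.

End GeometricGrowth.

Lemma sqrt_2_2sqrt2_bounds : 1 <= sqrt (2 + 2 * sqrt 2) /\ sqrt (2 + 2 * sqrt 2) ^ 8 <= 544.
Proof.
have s_ge0 : 0 <= sqrt 2 by apply: sqrt_pos.
have s_sq : sqrt 2 * sqrt 2 = 2 by apply: sqrt_sqrt; lra.
have s_le : sqrt 2 <= 17 / 12 by nra.
set b := sqrt (2 + 2 * sqrt 2).
have b_ge0 : 0 <= b by apply: sqrt_pos.
have b_sq : b * b = 2 + 2 * sqrt 2 by apply: sqrt_sqrt; lra.
split; first by nra.
have -> : b ^ 8 = (b * b) * (b * b) * ((b * b) * (b * b)) by simpl; ring.
by rewrite b_sq; nra.
Qed.

Theorem mainTheorem18 :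
  (exists C : R, (0 < C)%R /\
     exists N : nat, forall n : nat, (N <= n)%N ->
       (h_max n <= f_max n)%N /\
       (C * (sqrt (2 + 2 * sqrt 2)) ^ n <= INR (h_max n))%R)
  /\
  (exists N : nat, forall n : nat, (N <= n)%N ->
       ((21973 / 10000) ^ n < INR (h_max n))%R).
Proof.
have [beta_ge1 beta_pow8] := sqrt_2_2sqrt2_bounds.
have c_gt0 : 0 < 3 / 690 by lra.
split.
- exists (3 / 690 / sqrt (2 + 2 * sqrt 2) ^ 7); split.
    by apply: Rdiv_lt_0_compat => //; apply: pow_lt; lra.
  exists 0%N => n _; split; first exact: h_max_le_f_max.
  exact: (geometric_lower_bound (p := 8) _ c_gt0 _ h_max_lower_boundR).
- apply: (geometric_eventually_above (p := 8) _ c_gt0 _ h_max_lower_boundR) => //=; lra.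
Qed.
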